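(* Consider the closed-loop system $\dot x=f^{\mathsf c}(x,w)=f(x,N(x),w)$ on $\mathbb{R}^n$ with $f^{\mathsf c}$ continuous and locally Lipschitz in $x$, and disturbance set $[\underline w,\overline w]$. Let $T\in\mathbb{R}^{n\times n}$ be invertible, $\Phi(x)=Tx$, and let $\dot y=g^{\mathsf c}(y,w):=Tf(T^{-1}y,N(T^{-1}y),w)$ be the transformed system. Let $\mathsf G^{\mathsf c}_{\mathcal S}$ be an $\mathcal S$-localized inclusion function for $g^{\mathsf c}$, let $\mathsf E_{T,\mathcal S}$ be the embedding map induced by $\mathsf G^{\mathsf c}_{\mathcal S}$, and let $[\underline y_0,\overline y_0]\subseteq\mathcal S$. If $\mathsf E_{T,\mathcal S}(\underline y_0,\overline y_0,\underline w,\overline w)\ge_{\mathrm{SE}}0$, then the paralleletope $\Phi^{-1}([\underline y_0,\overline y_0])=\{T^{-1}y:y\in[\underline y_0,\overline y_0]\}$ is a $[\underline w,\overline w]$-robustly forward invariant set for $\dot x=f^{\mathsf c}(x,w)$.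
   Context: Notation: $x\le y$ componentwise; $[\underline y,\overline y]=\{y:\underline y\le y\le\overline y\}$; $\mathcal T^{2n}_{\ge0}=\{(x,\hat x):x\le\hat x\}$; $(a,b)\ge_{\mathrm{SE}}0$ means $a\ge0$ and $b\le0$ componentwise. $y_{i:z}$ is $y$ with $i$-th entry replaced by $z_i$. An $\mathcal S$-localized inclusion function $\mathsf G=(\underline{\mathsf G},\overline{\mathsf G})$ for $g^{\mathsf c}$ satisfies $\underline{\mathsf G}(\underline y,\overline y,\underline w,\overline w)\le g^{\mathsf c}(y,w)\le\overline{\mathsf G}(\underline y,\overline y,\underline w,\overline w)$ for all $y\in[\underline y,\overline y]\subseteq\mathcal S$, $w\in[\underline w,\overline w]$. Induced embedding map: $(\underline{\mathsf E}_{T,\mathcal S})_i=(\underline{\mathsf G}(\underline y,\overline y_{i:\underline y},\underline w,\overline w))_i$, $(\overline{\mathsf E}_{T,\mathcal S})_i=(\overline{\mathsf G}(\underline y_{i:\overline y},\overline y,\underline w,\overline w))_i$. A set $\mathcal X$ is $\mathcal W$-robustly forward invariant if every solution starting in $\mathcal X$ under any piecewise continuous disturbance with values in $\mathcal W$ remains in $\mathcal X$ for all $t\ge0$. *)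

From HB Require Import structures.
From mathcomp Require Import all_boot all_order all_algebra.
From mathcomp Require Import all_classical all_reals all_analysis.
Set Implicit Arguments. Unset Strict Implicit. Unset Printing Implicit Defensive.
Import Order.TTheory GRing.Theory Num.Theory.
Import numFieldNormedType.Exports.
Local Open Scope classical_set_scope.
Local Open Scope ring_scope.

Section Defs.
Variable R : realType.

Definition vle (n : nat) (x y : 'cV[R]_n) : Prop := forall i, x i 0 <= y i 0.

Definition box (n : nat) (lo hi : 'cV[R]_n) : set 'cV[R]_n :=
  [set y | vle lo y /\ vle y hi].

Definition repl (n : nat) (y : 'cV[R]_n) (i : 'I_n) (z : 'cV[R]_n) : 'cV[R]_n :=
  \col_j (if j == i then z j 0 else y j 0).

Definition closed_loop (n p q : nat)
  (f : 'cV[R]_n -> 'cV[R]_p -> 'cV[R]_q -> 'cV[R]_n) (N : 'cV[R]_n -> 'cV[R]_p)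
  : 'cV[R]_n -> 'cV[R]_q -> 'cV[R]_n := fun x w => f x (N x) w.

Definition transformed (n p q : nat) (T : 'M[R]_n)
  (f : 'cV[R]_n -> 'cV[R]_p -> 'cV[R]_q -> 'cV[R]_n) (N : 'cV[R]_n -> 'cV[R]_p)
  : 'cV[R]_n -> 'cV[R]_q -> 'cV[R]_n :=
  fun y w => T *m f (invmx T *m y) (N (invmx T *m y)) w.

Definition jointly_continuous (n q : nat) (F : 'cV[R]_n -> 'cV[R]_q -> 'cV[R]_n)
  : Prop := continuous (fun xw : 'cV[R]_n * 'cV[R]_q => F xw.1 xw.2).

Definition locally_lipschitz_x (n q : nat) (F : 'cV[R]_n -> 'cV[R]_q -> 'cV[R]_n)
  (W : set 'cV[R]_q) : Prop :=
  forall x0 : 'cV[R]_n, exists r : R, exists L : R, 0 < r /\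
    forall x x' w, `|x - x0| < r -> `|x' - x0| < r -> W w ->
      `|F x w - F x' w| <= L * `|x - x'|.

Definition localized_inclusion (n q : nat) (g : 'cV[R]_n -> 'cV[R]_q -> 'cV[R]_n)
  (S : set 'cV[R]_n)
  (Gl Gu : 'cV[R]_n -> 'cV[R]_n -> 'cV[R]_q -> 'cV[R]_q -> 'cV[R]_n) : Prop :=
  forall yl yu wl wu, box yl yu `<=` S ->
    forall y w, box yl yu y -> box wl wu w ->
      vle (Gl yl yu wl wu) (g y w) /\ vle (g y w) (Gu yl yu wl wu).

Definition emb_lo (n q : nat)
  (Gl : 'cV[R]_n -> 'cV[R]_n -> 'cV[R]_q -> 'cV[R]_q -> 'cV[R]_n)
  (yl yu : 'cV[R]_n) (wl wu : 'cV[R]_q) : 'cV[R]_n :=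
  \col_i (Gl yl (repl yu i yl) wl wu) i 0.
Definition emb_up (n q : nat)
  (Gu : 'cV[R]_n -> 'cV[R]_n -> 'cV[R]_q -> 'cV[R]_q -> 'cV[R]_n)
  (yl yu : 'cV[R]_n) (wl wu : 'cV[R]_q) : 'cV[R]_n :=
  \col_i (Gu (repl yl i yu) yu wl wu) i 0.

Definition ge_SE0 (n : nat) (a b : 'cV[R]_n) : Prop := vle 0 a /\ vle b 0.

Definition piecewise_continuous (q : nat) (w : R -> 'cV[R]_q) : Prop :=
  forall b : R, 0 < b -> exists s : seq R,
    (forall t, 0 < t < b -> t \notin s -> {for t, continuous w}) /\
    (forall t, 0 <= t < b -> cvg (w x @[x --> t^'+])) /\
    (forall t, 0 < t <= b -> cvg (w x @[x --> t^'-])).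

Definition is_solution (n q : nat) (F : 'cV[R]_n -> 'cV[R]_q -> 'cV[R]_n)
  (w : R -> 'cV[R]_q) (x : R -> 'cV[R]_n) : Prop :=
  forall t : R, 0 <= t -> forall i : 'I_n,
    (lebesgue_measure).-integrable `[0, t] (fun s => (F (x s) (w s) i 0)%:E) /\
    x t i 0 = x 0 i 0 + Rintegral lebesgue_measure `[0, t] (fun s => F (x s) (w s) i 0).

Definition robustly_forward_invariant (n q : nat)
  (F : 'cV[R]_n -> 'cV[R]_q -> 'cV[R]_n) (X : set 'cV[R]_n) (W : set 'cV[R]_q)
  : Prop :=
  forall (w : R -> 'cV[R]_q) (x : R -> 'cV[R]_n),
    piecewise_continuous w -> (forall t, 0 <= t -> W (w t)) ->
    is_solution F w x -> X (x 0) ->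
    forall t, 0 <= t -> X (x t).

Definition paralleletope (n : nat) (T : 'M[R]_n) (yl yu : 'cV[R]_n) : set 'cV[R]_n :=
  [set invmx T *m y | y in box yl yu].

End Defs.

From HB Require Import structures.
From mathcomp Require Import all_boot all_order all_algebra.
From mathcomp Require Import all_classical all_reals all_analysis.
From mathcomp Require Import ring lra.
Import Order.TTheory GRing.Theory Num.Theory.
Import numFieldNormedType.Exports.
Local Open Scope classical_set_scope.
Local Open Scope ring_scope.
Set Implicit Arguments. Unset Strict Implicit.

(* In the coordinates y = T x the paralleletope becomes the box [yl0, yu0] and
   solutions of the closed loop become solutions of the transformed system g.
   On the faces {y_i = yl0_i} and {y_i = yu0_i} the inclusion function encloses
   g, so the embedding condition E >=_SE 0 says that g points into the box on
   every face.  Invariance of the box is then a barrier argument: near a point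
   of the box, local Lipschitz continuity bounds the outward component of g at
   distance ep from the box by L ep, so on a short time interval the solution
   cannot leave the box inflated by ep (1 + 2 L (s - t)); letting ep go to 0
   and sweeping [0, t] by continuous induction gives the claim. *)

Section RealAnalysis.
Variable R : realType.

Lemma real_interval_induction (a b : R) (Q : R -> Prop) : a <= b -> Q a ->
  (forall t, a < t <= b -> (forall s, a <= s < t -> Q s) -> Q t) ->
  (forall t, a <= t < b -> (forall s, a <= s <= t -> Q s) ->
     exists2 d, 0 < d & forall s, t < s < t + d -> Q s) ->
  forall s, a <= s <= b -> Q s.
Proof.
move=> ab Qa Hl Hr.
pose A := [set t | a <= t <= b /\ forall s, a <= s <= t -> Q s].
have Aa : A a.
  split; first by rewrite lexx ab.
  by move=> s; rewrite -eq_le => /eqP <-.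
have hs : has_sup A by split; [exists a | exists b => t [/andP[]]].
set c := sup A.
have ac : a <= c by apply: sup_upper_bound.
have cb : c <= b by apply: ge_sup; [exists a | move=> t [/andP[]]].
have Qlt : forall s, a <= s < c -> Q s.
  move=> s /andP[aS sc].
  have [t [/andP[_ tb] Qt] ct] := @sup_adherent _ A (c - s) ltac:(by rewrite subr_gt0) hs.
  apply: Qt; rewrite aS /=; rewrite -/c in ct; lra.
have Qc : Q c.
  move: ac; rewrite le_eqVlt => /orP[/eqP <-| ac] //.
  by apply: Hl => //; rewrite ac cb.
have Ac : A c.
  split; first by rewrite ac cb.
  move=> s /andP[aS]; rewrite le_eqVlt => /orP[/eqP -> //|sc].
  by apply: Qlt; rewrite aS sc.
have cb' : c = b.
  apply/eqP; rewrite eq_le cb /= leNgt; apply/negP => cb'.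
  have [d d0 Hd] : exists2 d, 0 < d & forall s, c < s < c + d -> Q s.
    by apply: Hr; [rewrite ac cb' | case: Ac].
  pose c' := Num.min (c + d / 2) b.
  have cc' : c < c' by rewrite /c' lt_min cb' andbT; lra.
  have Ac' : A c'.
    split.
      have c'b : c' <= b by rewrite /c' ge_min lexx orbT.
      apply/andP; split => //; lra.
    move=> s /andP[aS sc'].
    have [sc|cs] := leP s c; first by case: Ac => _; apply; rewrite aS sc.
    apply: Hd; rewrite cs /=; move: sc'; rewrite /c' le_min => /andP[] *; lra.
  have := sup_upper_bound hs Ac'; rewrite -/c; lra.
move=> s /andP[aS sb]; case: Ac => _; apply; rewrite aS cb' sb //.
Qed.

Lemma exists_pos_forall_ord (n : nat) (P : 'I_n -> R -> Prop) :
  (forall i d d', 0 < d' -> d' <= d -> P i d -> P i d') ->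
  (forall i, exists2 d, 0 < d & P i d) -> exists2 d, 0 < d & forall i, P i d.
Proof.
move=> Pmon H.
have /boolp.choice [e He] : forall i, exists d, 0 < d /\ P i d.
  by move=> i; have [d d0 Pd] := H i; exists d.
have e_min_gt0 : 0 < \big[Order.min/1]_i e i by apply: lt_bigmin => // i _; case: (He i).
exists (\big[Order.min/1]_i e i) => // i.
by case: (He i) => _ Pi; apply: (Pmon i (e i)) => //; exact: bigmin_le.
Qed.

(* Continuity at [t] of a function only known on [0, +oo), as for solutions. *)
Definition continuous_at_nonneg (u : R -> R) (t : R) := forall e, 0 < e ->
  exists2 d, 0 < d & forall s, 0 <= s -> `|s - t| < d -> `|u s - u t| < e.

Lemma continuous_at_nonnegN u t :
  continuous_at_nonneg u t -> continuous_at_nonneg (fun s => - u s) t.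
Proof.
move=> H e e0; have [d d0 Hd] := H e e0; exists d => // s s0 st.
by rewrite -opprD normrN; apply: Hd.
Qed.

Lemma continuous_at_nonneg_lb (u : R -> R) (a t c : R) : 0 <= a -> a < t ->
  continuous_at_nonneg u t -> (forall s, a <= s < t -> c <= u s) -> c <= u t.
Proof.
move=> a0 at_ Hc H; rewrite leNgt; apply/negP => ut.
have [d d0 Hd] := Hc (c - u t) ltac:(by rewrite subr_gt0).
pose s := Num.max a (t - d / 2).
have as_ : a <= s by rewrite /s le_max lexx.
have st : s < t by rewrite /s gt_max at_ /=; lra.
have cs := H s ltac:(by rewrite as_ st).
have : `|s - t| < d.
  rewrite ltr_norml; apply/andP; split; last lra.
  have : t - d / 2 <= s by rewrite /s le_max lexx orbT.
  lra.
move=> /(Hd s (le_trans a0 as_)); rewrite ltr_norml => /andP[_]; lra.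
Qed.

Lemma continuous_at_nonneg_ub (u : R -> R) (a t c : R) : 0 <= a -> a < t ->
  continuous_at_nonneg u t -> (forall s, a <= s < t -> u s <= c) -> u t <= c.
Proof.
move=> a0 at_ Hc H; rewrite -lerN2.
apply: (continuous_at_nonneg_lb a0 at_ (continuous_at_nonnegN Hc)).
by move=> s /H; rewrite lerN2.
Qed.

Definition barrier_offset (ep L t s : R) := ep * (1 + 2 * L * (s - t)).

Lemma barrier_offset_le (ep L t s s' : R) : 0 < ep -> 0 < L -> s <= s' ->
  barrier_offset ep L t s <= barrier_offset ep L t s'.
Proof.
move=> ep0 L0 ss'; apply: ler_wpM2l; first exact: ltW.
by rewrite lerD2l; apply: ler_wpM2l; [rewrite mulr_ge0 // ltW | rewrite lerD2r].
Qed.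

Lemma barrier_offset_ge (ep L t s : R) : 0 < ep -> 0 < L -> t <= s ->
  ep <= barrier_offset ep L t s.
Proof.
move=> ep0 L0 ts; have := barrier_offset_le t ep0 L0 ts.
by rewrite /barrier_offset subrr mulr0 addr0 mulr1.
Qed.

Lemma barrier_offset_le2 (ep L t s : R) : 0 < ep -> 0 < L -> 2 * L * (s - t) <= 1 ->
  barrier_offset ep L t s <= 2 * ep.
Proof.
move=> ep0 L0 sL; rewrite /barrier_offset (_ : 2 * ep = ep * 2); last by ring.
by apply: ler_wpM2l; [exact: ltW | lra].
Qed.

(* If [u] stays strictly above the receding barrier [c - barrier_offset ep L t s]
   before [tau] and decreases at rate at most [L] times the offset while below
   [c], it cannot touch the barrier at [tau]: the barrier recedes at rate
   [2 L ep], faster than [u] can follow. *)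
Lemma lower_barrier (u : R -> R) (t tau c ep L : R) :
  0 <= t -> t < tau -> 0 < ep -> 0 < L -> 2 * L * (tau - t) <= 1 ->
  continuous_at_nonneg u tau ->
  (forall s, t <= s < tau -> c - barrier_offset ep L t s < u s) ->
  (forall a, t <= a < tau -> (forall s, a < s <= tau -> u s <= c) ->
     - (L * barrier_offset ep L t tau) * (tau - a) <= u tau - u a) ->
  c - barrier_offset ep L t tau < u tau.
Proof.
move=> t0 ttau ep0 L0 Ltau Hc Hlt Hinc.
set ph := barrier_offset ep L t tau.
have ph0 : 0 < ph := lt_le_trans ep0 (barrier_offset_ge ep0 L0 (ltW ttau)).
have ph2 : ph <= 2 * ep := barrier_offset_le2 ep0 L0 Ltau.
have nonstrict : c - ph <= u tau.
  apply: (continuous_at_nonneg_lb t0 ttau Hc) => s /andP[ts stau].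
  have := Hlt s ltac:(by rewrite ts stau).
  by have := barrier_offset_le t ep0 L0 (ltW stau); rewrite -/ph; lra.
rewrite lt_neqAle nonstrict andbT; apply/negP => /eqP ueq.
have [d d0 Hd] := Hc ph ph0.
pose hh := Num.min (d / 2) (tau - t).
have hh0 : 0 < hh by rewrite /hh lt_min subr_gt0 ttau andbT; lra.
have hhd : hh <= d / 2 by rewrite /hh ge_min lexx.
have hht : hh <= tau - t by rewrite /hh ge_min lexx orbT.
pose a := tau - hh.
have below : forall s, a < s <= tau -> u s <= c.
  move=> s /andP[as_ stau].
  have : `|s - tau| < d by rewrite ltr_norml; apply/andP; split; rewrite /a in as_; lra.
  move=> /(Hd s ltac:(rewrite /a in as_; lra)); rewrite ltr_norml => /andP[_]; lra.
have hinc := Hinc a ltac:(rewrite /a; apply/andP; split; lra) below.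
have ha := Hlt a ltac:(rewrite /a; apply/andP; split; lra).
have pha : barrier_offset ep L t a = ph - 2 * L * ep * hh.
  by rewrite /ph /barrier_offset /a; ring.
rewrite pha in ha; rewrite (_ : tau - a = hh) -/ph in hinc; last by rewrite /a; ring.
(* the offset drop [2 L ep hh] exceeds the possible decrease [L ph hh] of [u] *)
have : 0 <= L * hh * (2 * ep - ph) by apply: mulr_ge0; [apply: mulr_ge0; apply: ltW | lra].
nra.
Qed.

End RealAnalysis.

Section MatrixNorm.
Variable R : realType.

Lemma normr_mx_entry_le m k (v : 'M[R]_(m, k)) i j : `|v i j| <= `|v|.
Proof.
rewrite [leRHS]/Num.Def.normr/= mx_normrE.
by apply: le_trans; last exact: (le_bigmax _ _ (i, j)).
Qed.

Lemma mx_normr_le m k (v : 'M[R]_(m, k)) c :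
  0 <= c -> (forall i j, `|v i j| <= c) -> `|v| <= c.
Proof.
move=> c0 H; rewrite [leLHS]/Num.Def.normr/= mx_normrE.
by apply: bigmax_le => // -[i j] _; exact: H.
Qed.

Lemma mx_normr_lt m k (v : 'M[R]_(m, k)) c :
  0 < c -> (forall i j, `|v i j| < c) -> `|v| < c.
Proof.
move=> c0 H; rewrite [ltLHS]/Num.Def.normr/= mx_normrE.
by apply: bigmax_lt => // -[i j] _; exact: H.
Qed.

(* A bound on the operator norm of [A] for the max norm, kept positive so that
   one can divide by it. *)
Definition mx_gain m k (A : 'M[R]_(m, k)) : R := 1 + \sum_i \sum_j `|A i j|.

Lemma mx_gain_gt0 m k (A : 'M[R]_(m, k)) : 0 < mx_gain A.
Proof.
rewrite /mx_gain; apply: (lt_le_trans ltr01); rewrite lerDl.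
by apply: sumr_ge0 => i _; apply: sumr_ge0.
Qed.

Lemma normr_mulmx_le m k (A : 'M[R]_(m, k)) (v : 'cV[R]_k) :
  `|A *m v| <= mx_gain A * `|v|.
Proof.
apply: mx_normr_le; first by rewrite mulr_ge0 // ltW // mx_gain_gt0.
move=> i j; rewrite mxE; apply: (le_trans (ler_norm_sum _ _ _)).
apply: (@le_trans _ _ ((\sum_l `|A i l|) * `|v|)).
  rewrite mulr_suml; apply: ler_sum => l _; rewrite normrM.
  by apply: ler_wpM2l => //; exact: normr_mx_entry_le.
apply: ler_wpM2r => //; rewrite /mx_gain (bigD1 i) //=.
have : 0 <= \sum_(i0 < m | i0 != i) \sum_(j0 < k) `|A i0 j0|.
  by apply: sumr_ge0 => *; apply: sumr_ge0.
lra.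
Qed.

End MatrixNorm.

Section Integrals.
Variable R : realType.
Notation mu := (@lebesgue_measure R).

Lemma integrable_cst_itv (a b M : R) : mu.-integrable `]a, b] (EFin \o cst M).
Proof.
apply/integrableP; split.
  by apply/measurable_realfun.measurable_EFinP; exact: measurable_cst.
rewrite (_ : (fun x => `|(EFin \o cst M) x|)%E = cst (`|M|)%:E); last by apply/funext.
rewrite integral_cst //=.
have := (@lebesgue_measure_itv R `]a, b]) => /= ->; rewrite lte_fin.
by case: ifP => _; rewrite ?mule0 -?EFinB -?EFinM ltry.
Qed.

Lemma Rintegral_cst_itv (a b M : R) : a <= b -> \int[mu]_(x in `]a, b]) M = M * (b - a).
Proof.
move=> ab; rewrite Rintegral_cst //.
have := (@lebesgue_measure_itv R `]a, b]) => /= ->; rewrite lte_fin.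
by move: ab; rewrite le_eqVlt => /orP[/eqP->|->]; rewrite ?ltxx ?subrr ?mulr0.
Qed.

Lemma Rintegral_itv_ge (k : R -> R) (a b M : R) : a <= b ->
  mu.-integrable `]a, b] (EFin \o k) ->
  (forall s, a < s <= b -> M <= k s) -> M * (b - a) <= \int[mu]_(x in `]a, b]) k x.
Proof.
move=> ab ki H; rewrite -Rintegral_cst_itv //.
by apply: le_Rintegral => //; exact: integrable_cst_itv.
Qed.

Lemma Rintegral_itv_le (k : R -> R) (a b M : R) : a <= b ->
  mu.-integrable `]a, b] (EFin \o k) ->
  (forall s, a < s <= b -> k s <= M) -> \int[mu]_(x in `]a, b]) k x <= M * (b - a).
Proof.
move=> ab ki H; rewrite -Rintegral_cst_itv //.
by apply: le_Rintegral => //; exact: integrable_cst_itv.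
Qed.

Lemma Rintegral_lincomb (D : set R) (I : Type) (r : seq I) (c : I -> R)
    (g : I -> R -> R) :
  measurable D -> (forall j, mu.-integrable D (EFin \o g j)) ->
  mu.-integrable D (EFin \o (fun s => \sum_(j <- r) c j * g j s)) /\
  \int[mu]_(s in D) (\sum_(j <- r) c j * g j s) =
    \sum_(j <- r) c j * \int[mu]_(s in D) g j s.
Proof.
move=> mD gi; elim: r => [|j r [IHi IHe]].
  rewrite big_nil; under eq_Rintegral do rewrite big_nil.
  split; last by rewrite Rintegral_cst // mul0r.
  rewrite (_ : _ \o _ = cst 0%E); first exact: integrable0.
  by apply/funext => s /=; rewrite big_nil.
have cgj : mu.-integrable D (EFin \o (fun s => c j * g j s)).
  rewrite (_ : EFin \o _ = (fun x => (c j)%:E * (EFin \o g j) x)%E).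
    exact: integrableZl.
  by apply/funext => s /=; rewrite EFinM.
have -> : (fun s => \sum_(j0 <- j :: r) c j0 * g j0 s) =
          (fun s => c j * g j s + \sum_(j0 <- r) c j0 * g j0 s).
  by apply/funext => s; rewrite big_cons.
rewrite big_cons; split.
  rewrite (_ : EFin \o _ = ((EFin \o (fun s => (c j * g j s)%R)) \+
                           (EFin \o (fun s => (\sum_(j0 <- r) c j0 * g j0 s)%R)))%E).
    exact: integrableD.
  by apply/funext => s /=; rewrite EFinD.
by rewrite RintegralD // RintegralZl // IHe.
Qed.

Lemma continuous_at_nonneg_Rintegral (f : R -> R) (b t : R) : 0 <= t -> t < b ->
  mu.-integrable `[0, b] (EFin \o f) ->
  continuous_at_nonneg (fun s => \int[mu]_(x in `[0, s]) f x) t.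
Proof.
move=> t0 tb fi e e0.
have := parameterized_integral_continuous (ltW (le_lt_trans t0 tb)) fi.
move/subspace_continuousP => /(_ t).
have tin : [set` `[0, b]] t by rewrite /= in_itv /= t0 ltW.
move=> /(_ tin) /cvgrPdist_lt /(_ e e0).
rewrite near_withinE => /nbhs_ballP [d /= d0 Hd].
exists (Num.min d (b - t)); first by rewrite lt_min d0 subr_gt0 tb.
move=> s s0; rewrite lt_min => /andP[sd sb].
have sin : [set` `[0, b]] s.
  rewrite /= in_itv /= s0 /=.
  move: sb; rewrite ltr_norml => /andP[_]; lra.
have := Hd s _ sin.
rewrite /from_subspace /parameterized_integral -normrN opprB; apply.
by rewrite /ball /= -normrN opprB.
Qed.

End Integrals.

Section Solutions.
Variables (R : realType) (n q : nat) (F : 'cV[R]_n -> 'cV[R]_q -> 'cV[R]_n).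
Variables (w : R -> 'cV[R]_q) (x : R -> 'cV[R]_n).
Hypothesis x_sol : is_solution F w x.
Notation mu := (@lebesgue_measure R).

Lemma solution_continuous i t : 0 <= t -> continuous_at_nonneg (fun s => x s i 0) t.
Proof.
move=> t0 e e0.
have tt1 : t < t + 1 by rewrite ltrDl.
have [d d0 Hd] := continuous_at_nonneg_Rintegral t0 tt1
  (x_sol (le_trans t0 (ltW tt1)) i).1 e0.
exists d => // s s0 st.
rewrite (x_sol s0 i).2 (x_sol t0 i).2 opprD addrACA subrr add0r.
exact: Hd.
Qed.

Lemma solution_near t e : 0 <= t -> 0 < e -> exists2 d, 0 < d &
  forall j s, 0 <= s -> `|s - t| < d -> `|x s j 0 - x t j 0| < e.
Proof.
move=> t0 e0; apply: exists_pos_forall_ord => [j d d' _ d'd H s s0 sd | j].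
  by apply: H => //; exact: lt_le_trans d'd.
exact: (solution_continuous j t0).
Qed.

Lemma solution_increment i a b : 0 <= a -> a <= b ->
  mu.-integrable `]a, b] (EFin \o (fun s => F (x s) (w s) i 0)) /\
  x b i 0 - x a i 0 = \int[mu]_(s in `]a, b]) F (x s) (w s) i 0.
Proof.
move=> a0 ab; have [ib eb] := x_sol (le_trans a0 ab) i.
split.
  apply: integrableS ib => // s; rewrite /= !in_itv /= => /andP[as_ ->].
  by rewrite (le_trans a0 (ltW as_)).
rewrite eb (x_sol a0 i).2 opprD addrACA subrr add0r.
by rewrite (Rintegral_itvB ib) // bnd_simp.
Qed.

Lemma solution_increment_ge i a b M : 0 <= a -> a <= b ->
  (forall s, a < s <= b -> M <= F (x s) (w s) i 0) -> M * (b - a) <= x b i 0 - x a i 0.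
Proof.
move=> a0 ab H; have [ib ->] := solution_increment i a0 ab.
exact: Rintegral_itv_ge.
Qed.

Lemma solution_increment_le i a b M : 0 <= a -> a <= b ->
  (forall s, a < s <= b -> F (x s) (w s) i 0 <= M) -> x b i 0 - x a i 0 <= M * (b - a).
Proof.
move=> a0 ab H; have [ib ->] := solution_increment i a0 ab.
exact: Rintegral_itv_le.
Qed.

End Solutions.

Section Transformation.
Variable R : realType.
Notation mu := (@lebesgue_measure R).

Lemma is_solution_transformed n p q (f : 'cV[R]_n -> 'cV[R]_p -> 'cV[R]_q -> 'cV[R]_n)
    (N : 'cV[R]_n -> 'cV[R]_p) (T : 'M[R]_n) (w : R -> 'cV[R]_q) (x : R -> 'cV[R]_n) :
  T \in unitmx -> is_solution (closed_loop f N) w x ->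
  is_solution (transformed T f N) w (fun s => T *m x s).
Proof.
move=> HT x_sol t t0 i.
pose F := closed_loop f N.
have gE s : transformed T f N (T *m x s) (w s) i 0 =
            \sum_(j <- index_enum 'I_n) T i j * F (x s) (w s) j 0.
  by rewrite /transformed mulKmx // mxE.
have [int_sum int_sumE] := @Rintegral_lincomb R `[0, t] _ (index_enum 'I_n) (T i)
  (fun j s => F (x s) (w s) j 0) (measurable_itv _) (fun j => (x_sol t t0 j).1).
split.
  by rewrite (_ : (fun s => _) = EFin \o (fun s => \sum_(j <- index_enum 'I_n)
    T i j * F (x s) (w s) j 0)) //; apply/funext => s /=; rewrite gE.
under eq_Rintegral do rewrite gE.
rewrite int_sumE /= !mxE -big_split /=.
by apply: eq_bigr => j _; rewrite (x_sol t t0 j).2 mulrDr.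
Qed.

Lemma locally_lipschitz_x_mulmx n m q (F : 'cV[R]_m -> 'cV[R]_q -> 'cV[R]_m)
    (A : 'M[R]_(m, n)) (B : 'M[R]_(n, m)) (W : set 'cV[R]_q) :
  locally_lipschitz_x F W -> locally_lipschitz_x (fun y w => B *m F (A *m y) w) W.
Proof.
move=> Flip y0; have [r [L [r0 Hr]]] := Flip (A *m y0).
have KA := mx_gain_gt0 A; have KB := mx_gain_gt0 B.
exists (r / mx_gain A), (mx_gain B * `|L| * mx_gain A); split; first by rewrite divr_gt0.
have nearA y : `|y - y0| < r / mx_gain A -> `|A *m y - A *m y0| < r.
  move=> yy0; rewrite -mulmxBr; apply: le_lt_trans (normr_mulmx_le _ _) _.
  by rewrite mulrC -ltr_pdivlMr.
move=> y y' u yy0 y'y0 Wu.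
rewrite -mulmxBr; apply: le_trans (normr_mulmx_le _ _) _.
rewrite -!mulrA; apply: ler_wpM2l; first exact: ltW.
apply: le_trans (Hr _ _ _ (nearA _ yy0) (nearA _ y'y0) Wu) _.
apply: le_trans (ler_wpM2r (normr_ge0 _) (ler_norm L)) _.
by apply: ler_wpM2l => //; rewrite -mulmxBr; exact: normr_mulmx_le.
Qed.

End Transformation.

Section Faces.
Variable R : realType.

Definition inward_on_faces n q (g : 'cV[R]_n -> 'cV[R]_q -> 'cV[R]_n) (W : set 'cV[R]_q)
    (yl yu : 'cV[R]_n) :=
  forall z u, box yl yu z -> W u -> forall i,
    (z i 0 = yl i 0 -> 0 <= g z u i 0) /\ (z i 0 = yu i 0 -> g z u i 0 <= 0).

Lemma box_face_lo n (yl yu z : 'cV[R]_n) i :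
  box yl yu z -> z i 0 = yl i 0 -> box yl (repl yu i yl) z.
Proof.
move=> [zl zu] zi; split => // j; rewrite mxE.
by case: (j =P i) => [->|_]; rewrite ?zi.
Qed.

Lemma box_face_up n (yl yu z : 'cV[R]_n) i :
  box yl yu z -> z i 0 = yu i 0 -> box (repl yl i yu) yu z.
Proof.
move=> [zl zu] zi; split => // j; rewrite mxE.
by case: (j =P i) => [->|_]; rewrite ?zi.
Qed.

Lemma box_face_lo_sub n (yl yu : 'cV[R]_n) i :
  vle yl yu -> box yl (repl yu i yl) `<=` box yl yu.
Proof.
move=> ylu v [vl vu]; split => // j; apply: le_trans (vu j) _.
by rewrite mxE; case: (j =P i) => [->|_].
Qed.

Lemma box_face_up_sub n (yl yu : 'cV[R]_n) i :
  vle yl yu -> box (repl yl i yu) yu `<=` box yl yu.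
Proof.
move=> ylu v [vl vu]; split => // j; apply: le_trans _ (vl j).
by rewrite mxE; case: (j =P i) => [->|_].
Qed.

(* The [i]-th component of the embedding map encloses [g] on the [i]-th lower
   (resp. upper) face, so its sign condition makes [g] point inwards there. *)
Lemma embedding_inward n q (g : 'cV[R]_n -> 'cV[R]_q -> 'cV[R]_n) (S : set 'cV[R]_n)
    (Gl Gu : 'cV[R]_n -> 'cV[R]_n -> 'cV[R]_q -> 'cV[R]_q -> 'cV[R]_n)
    (yl yu : 'cV[R]_n) (wl wu : 'cV[R]_q) :
  localized_inclusion g S Gl Gu -> box yl yu `<=` S ->
  ge_SE0 (emb_lo Gl yl yu wl wu) (emb_up Gu yl yu wl wu) ->
  inward_on_faces g (box wl wu) yl yu.
Proof.
move=> Gincl BS [Elo Eup] z u zB uB i.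
have ylu : vle yl yu by case: zB => zl zu j; exact: le_trans (zl j) (zu j).
split => zi.
- have [+ _] := Gincl _ _ wl wu (subset_trans (box_face_lo_sub (i := i) ylu) BS) z u
    (box_face_lo zB zi) uB.
  by move=> /(_ i); apply: le_trans; have := Elo i; rewrite !mxE.
- have [_ +] := Gincl _ _ wl wu (subset_trans (box_face_up_sub (i := i) ylu) BS) z u
    (box_face_up zB zi) uB.
  by move=> /(_ i) /le_trans; apply; have := Eup i; rewrite !mxE.
Qed.

Definition inflated_box n (yl yu : 'cV[R]_n) (ep : R) (v : 'cV[R]_n) :=
  forall j, yl j 0 - ep <= v j 0 /\ v j 0 <= yu j 0 + ep.

Lemma clamp_spec (a b v ep : R) : 0 <= ep -> a <= b -> a - ep <= v -> v <= b + ep ->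
  let z := Num.max a (Num.min b v) in
  [/\ a <= z, z <= b, `|z - v| <= ep, (v <= a -> z = a) & (b <= v -> z = b)].
Proof.
move=> ep0 ab av vb z.
have [bv|vb'] := leP b v.
  have -> : z = b by rewrite /z (min_l bv) (max_r ab).
  split => //; first by rewrite ler_norml; apply/andP; split; lra.
  by move=> va; apply/eqP; rewrite eq_le ab; lra.
have [av'|va] := leP a v.
  have -> : z = v by rewrite /z (min_r (ltW vb')) (max_r av').
  split; [exact: av' | exact: ltW | by rewrite subrr normr0 | |];
    by move=> H; apply/eqP; rewrite eq_le; apply/andP; split; lra.
have -> : z = a by rewrite /z (min_r (ltW vb')) (max_l (ltW va)).
by split => //; rewrite ler_norml; apply/andP; split; lra.
Qed.

Lemma inflated_box_clamp n (yl yu v : 'cV[R]_n) ep :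
  0 <= ep -> vle yl yu -> inflated_box yl yu ep v ->
  exists z, box yl yu z /\ forall j, [/\ `|z j 0 - v j 0| <= ep,
    v j 0 <= yl j 0 -> z j 0 = yl j 0 & yu j 0 <= v j 0 -> z j 0 = yu j 0].
Proof.
move=> ep0 ylu vB.
pose z := \col_j Num.max (yl j 0) (Num.min (yu j 0) (v j 0)).
have zP j := let: conj vl vu := vB j in clamp_spec ep0 (ylu j) vl vu.
exists z; split; first by split => j; rewrite mxE; case: (zP j).
by move=> j; rewrite mxE; case: (zP j).
Qed.

Definition outward_lipschitz n q (g : 'cV[R]_n -> 'cV[R]_q -> 'cV[R]_n)
    (W : set 'cV[R]_q) (yl yu y0 : 'cV[R]_n) (r L : R) :=
  forall (v : 'cV[R]_n) (u : 'cV[R]_q) ep, 0 <= ep -> ep < r ->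
    (forall j, `|v j 0 - y0 j 0| < r) ->
    inflated_box yl yu ep v -> W u -> forall i,
    (v i 0 <= yl i 0 -> - (L * ep) <= g v u i 0) /\
    (yu i 0 <= v i 0 -> g v u i 0 <= L * ep).

(* Compare [g] at [v] with [g] at the clamp [z] of [v] onto the box: [z] lies
   on every face beyond which [v] is, and there [g] points inwards. *)
Lemma inward_outward_lipschitz n q (g : 'cV[R]_n -> 'cV[R]_q -> 'cV[R]_n)
    (W : set 'cV[R]_q) (yl yu : 'cV[R]_n) :
  locally_lipschitz_x g W -> inward_on_faces g W yl yu ->
  forall y0, box yl yu y0 ->
    exists2 r, 0 < r & exists2 L, 0 < L & outward_lipschitz g W yl yu y0 r L.
Proof.
move=> glip gin y0 [y0l y0u].
have [r [L [r0 Hr]]] := glip y0.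
have ylu : vle yl yu by move=> j; exact: le_trans (y0l j) (y0u j).
exists (r / 2); first by rewrite divr_gt0.
exists (`|L| + 1); first by have := normr_ge0 L; lra.
move=> v u ep ep0 epr vy0 vB Wu i.
have [z [zB zv]] := inflated_box_clamp ep0 ylu vB.
have vz : `|v - z| <= ep.
  by apply: mx_normr_le => // j k; rewrite (ord1 k) !mxE distrC; case: (zv j).
have near_y0 (v' : 'cV[R]_n) : (forall j, `|v' j 0 - y0 j 0| < r) -> `|v' - y0| < r.
  by move=> H; apply: mx_normr_lt => // j k; rewrite (ord1 k) !mxE.
have gvz : `|g v u i 0 - g z u i 0| <= (`|L| + 1) * ep.
  have -> : g v u i 0 - g z u i 0 = (g v u - g z u) i 0 by rewrite !mxE.
  apply: le_trans (normr_mx_entry_le _ _ _) _.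
  apply: le_trans (Hr _ _ _ (near_y0 _ _) (near_y0 _ _) Wu) _.
  - by move=> j; have := vy0 j; lra.
  - move=> j; have [zvj _ _] := zv j.
    by have := ler_distD (v j 0) (z j 0) (y0 j 0); have := vy0 j; lra.
  apply: le_trans (ler_wpM2r (normr_ge0 _) (ler_norm L)) _.
  by apply: le_trans (ler_wpM2l (normr_ge0 L) vz) _; nra.
have [lo up] := gin z u zB Wu i; have [_ zlo zup] := zv i.
move: gvz; rewrite ler_norml => /andP[g1 g2].
by split => vi; [have := lo (zlo vi) | have := up (zup vi)]; lra.
Qed.

End Faces.

Section BoxInvariance.
Variables (R : realType) (n q : nat) (g : 'cV[R]_n -> 'cV[R]_q -> 'cV[R]_n).
Variables (W : set 'cV[R]_q) (yl yu : 'cV[R]_n).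
Variables (w : R -> 'cV[R]_q) (y : R -> 'cV[R]_n).
Hypothesis y_sol : is_solution g w y.
Hypothesis w_in : forall t, 0 <= t -> W (w t).

Definition strictly_inflated (e : R) (v : 'cV[R]_n) :=
  forall j, yl j 0 - e < v j 0 /\ v j 0 < yu j 0 + e.

Lemma strictly_inflated_near (tau e : R) : 0 <= tau -> strictly_inflated e (y tau) ->
  exists2 d, 0 < d & forall s, tau < s < tau + d -> strictly_inflated e (y s).
Proof.
move=> tau0 ytau.
have [m m0 Hm] : exists2 m, 0 < m & forall j,
    m <= y tau j 0 - (yl j 0 - e) /\ m <= yu j 0 + e - y tau j 0.
  apply: exists_pos_forall_ord => [j d d' _ d'd [h1 h2] | j].
    by split; exact: le_trans d'd _.
  have [h1 h2] := ytau j.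
  exists (Num.min (y tau j 0 - (yl j 0 - e)) (yu j 0 + e - y tau j 0)).
    by rewrite lt_min !subr_gt0 h1 h2.
  by split; rewrite ge_min lexx ?orbT.
have [d d0 Hd] := solution_near y_sol tau0 m0.
exists d => // s /andP[taus sd] j.
have := Hd j s (le_trans tau0 (ltW taus)).
rewrite ger0_norm ?subr_ge0 ?ltW // ltr_norml => /(_ ltac:(lra)) /andP[e1 e2].
by have [m1 m2] := Hm j; lra.
Qed.

(* At [tau] the solution is still within [barrier_offset ep L t tau <= 2 ep < r]
   of the box near [y t], so the outward Lipschitz bound holds on [[t, tau]] and
   [lower_barrier] applies to each face, to the upper one after negation. *)
Lemma strictly_inflated_left (t tau r L ep : R) :
  0 <= t -> t < tau -> 0 < L -> outward_lipschitz g W yl yu (y t) r L ->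
  2 * L * (tau - t) <= 1 -> 0 < ep -> 2 * ep < r ->
  (forall s, t <= s <= tau -> forall j, `|y s j 0 - y t j 0| < r) ->
  (forall s, t <= s < tau -> strictly_inflated (barrier_offset ep L t s) (y s)) ->
  strictly_inflated (barrier_offset ep L t tau) (y tau).
Proof.
move=> t0 ttau L0 HL tauL ep0 epr near Hlt.
have tau0 : 0 <= tau by apply: le_trans t0 (ltW ttau).
set ph := barrier_offset ep L t tau.
have ph_s s : t <= s <= tau -> barrier_offset ep L t s <= ph.
  by move=> /andP[_ stau]; apply: barrier_offset_le.
have y_near s : t <= s <= tau -> inflated_box yl yu ph (y s).
  move=> /andP[ts]; rewrite le_eqVlt => /orP[/eqP -> | stau] j; last first.
    have [] := Hlt s ltac:(by rewrite ts stau) j.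
    by have := ph_s s ltac:(by rewrite ts ltW); lra.
  split.
  + apply: (continuous_at_nonneg_lb t0 ttau (solution_continuous y_sol j tau0)).
    move=> s' /andP[ts' s'tau]; have [+ _] := Hlt s' ltac:(by rewrite ts' s'tau) j.
    by have := ph_s s' ltac:(by rewrite ts' ltW); lra.
  + apply: (continuous_at_nonneg_ub t0 ttau (solution_continuous y_sol j tau0)).
    move=> s' /andP[ts' s'tau]; have [_ +] := Hlt s' ltac:(by rewrite ts' s'tau) j.
    by have := ph_s s' ltac:(by rewrite ts' ltW); lra.
have face s : t <= s <= tau -> forall i,
    (y s i 0 <= yl i 0 -> - (L * ph) <= g (y s) (w s) i 0) /\
    (yu i 0 <= y s i 0 -> g (y s) (w s) i 0 <= L * ph).
  move=> /andP[ts stau]; apply: HL.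
  + exact: le_trans (ltW ep0) (barrier_offset_ge ep0 L0 (ltW ttau)).
  + exact: le_lt_trans (barrier_offset_le2 ep0 L0 tauL) _.
  + by apply: near; rewrite ts.
  + by apply: y_near; rewrite ts.
  + exact: w_in (le_trans t0 ts).
move=> i; split.
- apply: (lower_barrier t0 ttau ep0 L0 tauL (solution_continuous y_sol i tau0)).
    by move=> s /Hlt /(_ i) [].
  move=> a /andP[ta atau] below.
  apply: (solution_increment_ge y_sol (le_trans t0 ta) (ltW atau)).
  move=> s /andP[as_ stau]; have [+ _] := face s ltac:(by rewrite (le_trans ta (ltW as_))) i.
  by apply; apply: below; rewrite as_ stau.
- suff : - yu i 0 - ph < - y tau i 0 by lra.
  apply: (lower_barrier t0 ttau ep0 L0 tauL
    (continuous_at_nonnegN (solution_continuous y_sol i tau0))).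
    by move=> s /Hlt /(_ i) [_]; lra.
  move=> a /andP[ta atau] below.
  suff : y tau i 0 - y a i 0 <= L * ph * (tau - a) by rewrite -/ph; lra.
  apply: (solution_increment_le y_sol (le_trans t0 ta) (ltW atau)).
  move=> s /andP[as_ stau]; have [_ +] := face s ltac:(by rewrite (le_trans ta (ltW as_))) i.
  by apply; rewrite -lerN2; apply: below; rewrite as_ stau.
Qed.

(* The invariant is strict inclusion in the box inflated by the growing offset
   [barrier_offset ep L t s], which outruns any escape of the solution. *)
Lemma inflated_box_growth (t s1 r L ep : R) :
  0 <= t -> box yl yu (y t) -> 0 < L -> outward_lipschitz g W yl yu (y t) r L ->
  t < s1 -> 2 * L * (s1 - t) <= 1 ->
  (forall s, t <= s <= s1 -> forall j, `|y s j 0 - y t j 0| < r) ->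
  0 < ep -> 2 * ep < r -> inflated_box yl yu (2 * ep) (y s1).
Proof.
move=> t0 [ytl ytu] L0 HL ts1 s1L near ep0 epr.
pose Q s := strictly_inflated (barrier_offset ep L t s) (y s).
suff Qs1 : Q s1.
  move=> j; have [? ?] := Qs1 j; have := barrier_offset_le2 ep0 L0 s1L; lra.
apply: (@real_interval_induction _ t s1 Q); [exact: ltW | | | | by rewrite lexx ltW].
- move=> j; have := ytl j; have := ytu j; have := barrier_offset_ge ep0 L0 (lexx t); lra.
- move=> tau /andP[ttau taus1] Hlt.
  apply: (strictly_inflated_left t0 ttau L0 HL _ ep0 epr) => //.
    by apply: le_trans s1L; apply: ler_wpM2l; [rewrite mulr_ge0 // ltW | lra].
  by move=> s /andP[ts stau]; apply: near; rewrite ts (le_trans stau).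
- move=> tau /andP[ttau taus1] Hle.
  have tau0 : 0 <= tau by apply: le_trans t0 ttau.
  have [d d0 Hd] := strictly_inflated_near tau0 (Hle tau ltac:(by rewrite ttau lexx)).
  exists d => // s /andP[taus sd] j.
  have [h1 h2] := Hd s ltac:(by rewrite taus sd) j.
  by have := barrier_offset_le t ep0 L0 (ltW taus); lra.
Qed.

Hypothesis g_outward : forall y0, box yl yu y0 ->
  exists2 r, 0 < r & exists2 L, 0 < L & outward_lipschitz g W yl yu y0 r L.

Lemma box_local_invariance t : 0 <= t -> box yl yu (y t) ->
  exists2 d, 0 < d & forall s, t < s < t + d -> box yl yu (y s).
Proof.
move=> t0 ytB.
have [r r0 [L L0 HL]] := g_outward ytB.
have [d0 d00 Hd0] := solution_near y_sol t0 r0.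
pose del := Num.min d0 (1 / (2 * L)).
have del0 : 0 < del by rewrite /del lt_min d00 /= divr_gt0 // mulr_gt0.
exists del => // s1 /andP[ts1 s1del].
have delL : 2 * L * (s1 - t) <= 1.
  have : del <= 1 / (2 * L) by rewrite /del ge_min lexx orbT.
  rewrite ler_pdivlMr ?mulr_gt0 // => H.
  have : 2 * L * (s1 - t) <= 2 * L * del.
    by apply: ler_wpM2l; [rewrite mulr_ge0 // ltW | lra].
  rewrite mulrC in H; lra.
have near s : t <= s <= s1 -> forall j, `|y s j 0 - y t j 0| < r.
  have : del <= d0 by rewrite /del ge_min lexx.
  move=> deld0 /andP[ts ss1] j; apply: Hd0; first exact: le_trans t0 ts.
  by rewrite ger0_norm ?subr_ge0 //; lra.
have grow ep : 0 < ep -> 2 * ep < r -> inflated_box yl yu (2 * ep) (y s1).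
  exact: inflated_box_growth t0 ytB L0 HL ts1 delL near.
split => i; rewrite leNgt; apply/negP => yi.
- pose ep := Num.min (r / 4) ((yl i 0 - y s1 i 0) / 4).
  have ep0 : 0 < ep by rewrite /ep lt_min !divr_gt0 // subr_gt0.
  have e1 : ep <= r / 4 by rewrite /ep ge_min lexx.
  have e2 : ep <= (yl i 0 - y s1 i 0) / 4 by rewrite /ep ge_min lexx orbT.
  by have [+ _] := grow ep ep0 ltac:(lra) i; lra.
- pose ep := Num.min (r / 4) ((y s1 i 0 - yu i 0) / 4).
  have ep0 : 0 < ep by rewrite /ep lt_min !divr_gt0 // subr_gt0.
  have e1 : ep <= r / 4 by rewrite /ep ge_min lexx.
  have e2 : ep <= (y s1 i 0 - yu i 0) / 4 by rewrite /ep ge_min lexx orbT.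
  by have [_ +] := grow ep ep0 ltac:(lra) i; lra.
Qed.

Lemma solution_stays_in_box : box yl yu (y 0) -> forall t, 0 <= t -> box yl yu (y t).
Proof.
move=> y0B t1 t10.
apply: (@real_interval_induction _ 0 t1 (fun s => box yl yu (y s))) => //;
  last by rewrite lexx t10.
- move=> t /andP[t0 _] Hlt; split => i.
  + apply: (continuous_at_nonneg_lb (lexx 0) t0 (solution_continuous y_sol i (ltW t0))).
    by move=> s /Hlt [+ _]; apply.
  + apply: (continuous_at_nonneg_ub (lexx 0) t0 (solution_continuous y_sol i (ltW t0))).
    by move=> s /Hlt [_ +]; apply.
- move=> t /andP[t0 _] Hle.
  by apply: (box_local_invariance t0); apply: Hle; rewrite t0 lexx.
Qed.

End BoxInvariance.

Lemma box_robustly_forward_invariant (R : realType) n q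
    (g : 'cV[R]_n -> 'cV[R]_q -> 'cV[R]_n) (W : set 'cV[R]_q) (yl yu : 'cV[R]_n) :
  locally_lipschitz_x g W -> inward_on_faces g W yl yu ->
  robustly_forward_invariant g (box yl yu) W.
Proof.
move=> glip gin w y _ w_in y_sol y0B t t0.
exact: solution_stays_in_box y_sol w_in (inward_outward_lipschitz glip gin) y0B t t0.
Qed.

Unset Implicit Arguments. Set Strict Implicit.

Theorem theorem2 (R : realType) (n p q : nat)
  (f : 'cV[R]_n -> 'cV[R]_p -> 'cV[R]_q -> 'cV[R]_n) (N : 'cV[R]_n -> 'cV[R]_p)
  (wl wu : 'cV[R]_q) (T : 'M[R]_n) (S : set 'cV[R]_n)
  (Gl Gu : 'cV[R]_n -> 'cV[R]_n -> 'cV[R]_q -> 'cV[R]_q -> 'cV[R]_n)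
  (yl0 yu0 : 'cV[R]_n) :
  jointly_continuous (closed_loop f N) ->
  locally_lipschitz_x (closed_loop f N) (box wl wu) ->
  T \in unitmx ->
  localized_inclusion (transformed T f N) S Gl Gu ->
  box yl0 yu0 `<=` S ->
  ge_SE0 (emb_lo Gl yl0 yu0 wl wu) (emb_up Gu yl0 yu0 wl wu) ->
  robustly_forward_invariant (closed_loop f N) (paralleletope T yl0 yu0) (box wl wu).
Proof.
move=> _ Flip HT Gincl BS E w x w_pc w_in x_sol [y0 y0B x0E] t t0.
have g_lip : locally_lipschitz_x (transformed T f N) (box wl wu).
  exact: (locally_lipschitz_x_mulmx (invmx T) T Flip).
have box_inv := box_robustly_forward_invariant g_lip (embedding_inward Gincl BS E).
exists (T *m x t); last by rewrite mulKmx.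
apply: (box_inv w _ w_pc w_in (is_solution_transformed HT x_sol)) => //.
by rewrite -x0E mulKVmx.
Qed.
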